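(* All POPs $(a,b,c;d,e)$ with either $\{a,b,c\}=\{1,2,3\}$ and $\{d,e\}=\{4,5\}$, or $\{a,b,c\}=\{3,4,5\}$ and $\{d,e\}=\{1,2\}$, are Wilf-equivalent to one another.
   Context: A partially ordered pattern (POP) $p$ of size $k$ is a partial order $\le_p$ on $[k]$. A permutation $\pi=\pi_1\cdots\pi_n$ contains $p$ if there are indices $i_1<\dots<i_k$ with $\pi_{i_j}<\pi_{i_m}$ whenever $j<_p m$; otherwise it avoids $p$. $p\sim q$ (Wilf-equivalence) means the numbers of permutations of $[n]$ avoiding $p$ and avoiding $q$ coincide for all $n\ge1$. Notation: $(a,b,c;d,e)$ denotes the POP of size $5$ on $\{a,b,c,d,e\}=[5]$ whose relations are generated by the chain $c<b<a$ and the chain $e<d$ (no other comparabilities). *)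

From mathcomp Require Import all_boot all_fingroup.
Set Implicit Arguments. Unset Strict Implicit. Unset Printing Implicit Defensive.

(* A POP of size k: a (strict) partial order on positions 'I_k
   (position i : 'I_k stands for the integer i+1 of [k]). *)
Definition pop (k : nat) := rel 'I_k.

Definition contains (k n : nat) (p : pop k) (pi : 'S_n) : bool :=
  [exists f : {ffun 'I_k -> 'I_n},
     [forall j : 'I_k, forall m : 'I_k,
        ((j < m)%N ==> (f j < f m)%N) && (p j m ==> (pi (f j) < pi (f m))%N)]].

Definition avoids (k n : nat) (p : pop k) (pi : 'S_n) : bool := ~~ contains p pi.

Definition av_count (k : nat) (p : pop k) (n : nat) : nat :=
  #|[set pi : 'S_n | avoids p pi]|.

Definition wilf_equiv (k l : nat) (p : pop k) (q : pop l) : Prop :=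
  forall n : nat, (1 <= n)%N -> av_count p n = av_count q n.

(* The POP (a,b,c;d,e) of size 5: strict order generated by c<b<a and e<d,
   i.e. exactly the strict relations c<b, b<a, c<a, e<d (elements are
   1-based integers a,...,e in [5]; position i : 'I_5 is the integer i+1). *)
Definition pop5 (a b c d e : nat) : pop 5 :=
  fun i j => (i.+1, j.+1) \in [:: (c, b); (b, a); (c, a); (e, d)].

Definition admissible (a b c d e : nat) : bool :=
  (perm_eq [:: a; b; c] [:: 1; 2; 3] && perm_eq [:: d; e] [:: 4; 5])
  || (perm_eq [:: a; b; c] [:: 3; 4; 5] && perm_eq [:: d; e] [:: 1; 2]).

From mathcomp Require Import all_boot all_fingroup zify.
Set Implicit Arguments. Unset Strict Implicit. Unset Printing Implicit Defensive.

(* A permutation contains (a,b,c;d,e) iff it is a concatenation u ++ v in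
   which one part contains the pair pattern (12 or 21) prescribed by d, e and
   the other the 3-pattern q prescribed by a, b, c; up to reversal the pair
   comes first.  Recording the first letter, the number of arrangements of a
   set W with no "pair, then q" satisfies a recursion that depends on q only
   through the numbers of q-avoiding arrangements of the subsets of W.  These
   numbers are the same for all six 3-patterns: 123 and 132 satisfy the same
   ballot recursion, and reversal and complementation reach the other four. *)

(** * Subsequences and splittings *)

Section SubsequencePredicates.
Variable T : eqType.
Implicit Types (P Q : pred (seq T)) (s t : seq T).

Fixpoint subseqs s : seq (seq T) :=
  if s is x :: s' then map (cons x) (subseqs s') ++ subseqs s' else [:: [::]].

Lemma mem_subseqs s t : (t \in subseqs s) = subseq t s.
Proof.
elim: s t => [|x s IHs] t /=; first by rewrite inE; case: t.
rewrite mem_cat IHs; case: t => [|y t] /=; first by rewrite !sub0seq orbT.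
have [->|neq_yx] := eqVneq y x.
  have cons_inj : injective (cons x) by move=> u v [].
  rewrite (mem_map cons_inj) IHs.
  by apply/orb_idr => /cons_subseq.
suff -> : (y :: t \in map (cons x) (subseqs s)) = false by [].
by apply/mapP => -[u _ [yx]]; rewrite yx eqxx in neq_yx.
Qed.

Definition has_subseq P s := has P (subseqs s).

Lemma has_subseqP P s : reflect (exists2 t, subseq t s & P t) (has_subseq P s).
Proof.
apply: (iffP hasP) => -[t]; rewrite ?mem_subseqs => sub_ts Pt; exists t => //.
by rewrite mem_subseqs.
Qed.

Lemma has_subseq_nil P : has_subseq P [::] = P [::].
Proof. by rewrite /has_subseq /= orbF. Qed.

Lemma has_subseq_cons P x s :
  has_subseq P (x :: s) = has_subseq (fun t => P (x :: t)) s || has_subseq P s.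
Proof. by rewrite /has_subseq /= has_cat has_map. Qed.

Lemma has_subseq_cons2 P y x s :
  has_subseq P (y :: x :: s) =
  [|| has_subseq (fun t => P [:: y, x & t]) s, has_subseq (fun t => P (y :: t)) s
    | has_subseq (fun t => P (x :: t)) s || has_subseq P s].
Proof. by rewrite !has_subseq_cons -!orbA. Qed.

Lemma subseq_has_subseq P s1 s2 :
  subseq s1 s2 -> has_subseq P s1 -> has_subseq P s2.
Proof.
move=> sub12 /has_subseqP[t sub_t1 Pt]; apply/has_subseqP; exists t => //.
exact: subseq_trans sub12.
Qed.

Lemma sub_has_subseq P Q s :
  (forall t, P t -> Q t) -> has_subseq P s -> has_subseq Q s.
Proof. by move=> PQ /has_subseqP[t sub_ts /PQ Qt]; apply/has_subseqP; exists t. Qed.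

Lemma eq_in_has_subseq P Q s :
  (forall t, subseq t s -> P t = Q t) -> has_subseq P s = has_subseq Q s.
Proof. by move=> PQ; apply: eq_in_has => t; rewrite mem_subseqs => /PQ. Qed.

Lemma has_subseq_andl (b : bool) P s :
  has_subseq (fun t => b && P t) s = b && has_subseq P s.
Proof. by case: b => //; rewrite /has_subseq has_pred0. Qed.

Lemma has_subseq1 (a : pred T) s :
  has_subseq (fun t => if t is [:: x] then a x else false) s = has a s.
Proof.
apply/has_subseqP/hasP => [[[|x []] //]|[x xs ax]]; last by exists [:: x]; rewrite ?sub1seq.
by rewrite sub1seq => xs ax; exists x.
Qed.

Lemma has_subseq_rev P s : has_subseq P (rev s) = has_subseq (fun t => P (rev t)) s.
Proof.
apply/has_subseqP/has_subseqP => -[t sub_t Pt]; exists (rev t); rewrite ?revK //.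
  by rewrite -subseq_rev revK.
by rewrite subseq_rev.
Qed.

Definition has_split P Q s :=
  has (fun i => has_subseq P (take i s) && has_subseq Q (drop i s)) (iota 0 (size s).+1).

Lemma has_splitP P Q s :
  reflect (exists i, has_subseq P (take i s) && has_subseq Q (drop i s)) (has_split P Q s).
Proof.
apply: (iffP hasP) => [[i _ PQi]|[i PQi]]; first by exists i.
have [le_is|lt_si] := leqP i (size s); first by exists i; rewrite // mem_iota ltnS.
exists (size s); first by rewrite mem_iota ltnS leqnn.
by rewrite take_size drop_size -(take_oversize (ltnW lt_si)) -(drop_oversize (ltnW lt_si)).
Qed.

Lemma has_split_subseqr P Q s : has_split P Q s -> has_subseq Q s.
Proof. by case/has_splitP=> i /andP[_]; apply: subseq_has_subseq (drop_subseq _ _). Qed.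

Lemma has_split_cons P Q x s : ~~ P [::] ->
  has_split P Q (x :: s) = has_split (fun t => P (x :: t)) Q s || has_split P Q s.
Proof.
move=> nP0; apply/has_splitP/orP => [[[|i]]|[]/has_splitP[i PQi]].
- by rewrite take0 has_subseq_nil (negbTE nP0).
- by rewrite /= has_subseq_cons andb_orl => /orP[] PQi; [left|right]; apply/has_splitP; exists i.
- by exists i.+1; rewrite /= has_subseq_cons andb_orl PQi.
- by exists i.+1; rewrite /= has_subseq_cons andb_orl PQi orbT.
Qed.

Lemma has_split_nil_pattern (b : bool) Q s :
  has_split (fun t => (t == [::]) && b) Q s = b && has_subseq Q s.
Proof.
apply/has_splitP/andP => [[i /andP[/has_subseqP[t _ /andP[_ ->]] Qi]]|[bT Qs]].
  by split=> //; apply: subseq_has_subseq Qi; apply: drop_subseq.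
by exists 0; rewrite take0 drop0 has_subseq_nil eqxx bT.
Qed.

Lemma sub_has_split P P' Q Q' s :
  (forall t, P t -> P' t) -> (forall t, Q t -> Q' t) ->
  has_split P Q s -> has_split P' Q' s.
Proof.
move=> PP' QQ' /has_splitP[i /andP[Pi Qi]]; apply/has_splitP; exists i.
by rewrite (sub_has_subseq PP' Pi) (sub_has_subseq QQ' Qi).
Qed.

Lemma eq_in_has_split P P' Q Q' s :
  (forall t, subseq t s -> P t = P' t) -> (forall t, subseq t s -> Q t = Q' t) ->
  has_split P Q s = has_split P' Q' s.
Proof.
move=> PP' QQ'; apply: eq_in_has => i _.
rewrite (@eq_in_has_subseq P P') ?(@eq_in_has_subseq Q Q') // => t sub_t.
  exact/QQ'/(subseq_trans sub_t)/drop_subseq.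
exact/PP'/(subseq_trans sub_t)/take_subseq.
Qed.

Lemma has_split_rev P Q s :
  has_split P Q (rev s) = has_split (fun t => Q (rev t)) (fun t => P (rev t)) s.
Proof.
apply/has_splitP/has_splitP => -[i].
  by rewrite take_rev drop_rev !has_subseq_rev andbC; exists (size s - i).
have [le_is|lt_si] := leqP i (size s).
  by exists (size s - i); rewrite take_rev drop_rev !has_subseq_rev subKn // andbC.
rewrite take_oversize ?drop_oversize ?(ltnW lt_si) // => PQ.
by exists 0; rewrite take_rev drop_rev !has_subseq_rev subn0 take_size drop_size andbC.
Qed.

Lemma subseq_catP t1 t2 s :
  subseq (t1 ++ t2) s -> exists i, subseq t1 (take i s) && subseq t2 (drop i s).
Proof.
elim: s t1 => [|x s IHs] [|y t1] /=.
- by case: t2 => // _; exists 0.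
- by [].
- by exists 0; rewrite take0 drop0.
have [->|neq_yx] := eqVneq y x => [/IHs|/(IHs (y :: t1))] [i sub_i]; exists i.+1.
  by rewrite /= eqxx.
by rewrite /= (negbTE neq_yx).
Qed.

Lemma has_subseq_cat (k : nat) (P P1 P2 : pred (seq T)) s :
  (forall t, P t = P1 (take k t) && P2 (drop k t)) -> (forall u, P1 u -> size u = k) ->
  has_subseq P s = has_split P1 P2 s.
Proof.
move=> defP sizeP1; apply/has_subseqP/has_splitP => [[t]|[i]].
  rewrite defP -{1}(cat_take_drop k t) => /subseq_catP[i /andP[sub1 sub2] /andP[P1t P2t]].
  by exists i; apply/andP; split; apply/has_subseqP; [exists (take k t)|exists (drop k t)].
case/andP=> /has_subseqP[t1 sub1 P1t1] /has_subseqP[t2 sub2 P2t2].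
exists (t1 ++ t2); first by rewrite -(cat_take_drop i s) cat_subseq.
by rewrite defP take_size_cat ?drop_size_cat ?P1t1 ?sizeP1.
Qed.

End SubsequencePredicates.

Lemma has_subseq_map (T U : eqType) (f : T -> U) (P : pred (seq U)) s :
  has_subseq P (map f s) = has_subseq (fun t => P (map f t)) s.
Proof.
apply/has_subseqP/has_subseqP => [[_ /subseqP[m sz_m ->]]|[t sub_t Pt]].
  by rewrite -map_mask => Pm; exists (mask m s); first exact: mask_subseq.
by exists (map f t) => //; apply: map_subseq.
Qed.

Lemma has_split_map (T U : eqType) (f : T -> U) (P Q : pred (seq U)) s :
  has_split P Q (map f s) = has_split (fun t => P (map f t)) (fun t => Q (map f t)) s.
Proof.
by rewrite /has_split size_map; apply: eq_has => i; rewrite -map_take -map_drop !has_subseq_map.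
Qed.

(** * Counting arrangements *)

Lemma count_orb_disjoint (T : Type) (a b : pred T) s :
  (forall x, a x -> b x = false) -> count (fun x => a x || b x) s = count a s + count b s.
Proof.
move=> ab; rewrite -count_predUI (@eq_count _ (predI a b) pred0) ?count_pred0 ?addn0 //.
by move=> x /=; case: (boolP (a x)) => // /ab ->.
Qed.

Section CountingPermutations.
Variable T : eqType.
Implicit Types (P : pred (seq T)) (W s t : seq T).

Lemma count_permutations_cons P W : uniq W -> 0 < size W ->
  count P (permutations W) =
  \sum_(x <- W) count (fun s => P (x :: s)) (permutations (rem x W)).
Proof.
move=> uW W_gt0; rewrite (seq.permP (permutationsE W_gt0)) undup_id //.
by rewrite count_flatten sumnE !big_map; apply: eq_bigr => x _; rewrite count_map.
Qed.

Lemma perm_eq_permutations W (L : seq (seq T)) :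
  uniq L -> (forall s, s \in L -> perm_eq s W) ->
  size (permutations W) <= size L -> perm_eq L (permutations W).
Proof.
move=> uL permL sizeL; apply: uniq_perm => //; first exact: permutations_uniq.
by apply: (uniq_min_size uL _ sizeL).2 => s /permL; rewrite mem_permutations.
Qed.

Lemma count_permutations_rev P W :
  count (fun s => P (rev s)) (permutations W) = count P (permutations W).
Proof.
rewrite -(count_map rev P); apply/seq.permP/perm_eq_permutations; rewrite ?size_map //.
  by rewrite (map_inj_uniq (can_inj revK)) permutations_uniq.
by move=> _ /mapP[s + ->]; rewrite mem_permutations perm_rev.
Qed.

Lemma mem_permutations_subseq W s t :
  s \in permutations W -> subseq t s -> {subset t <= W}.
Proof. by rewrite mem_permutations => /perm_mem sW /mem_subseq ts x /ts; rewrite sW. Qed.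

Definition avoiders P W := count (fun s => ~~ has_subseq P s) (permutations W).

Lemma avoiders_rev P W : avoiders (fun t => P (rev t)) W = avoiders P W.
Proof.
rewrite /avoiders -(count_permutations_rev (fun s => ~~ has_subseq P s)).
by apply: eq_count => s; rewrite has_subseq_rev.
Qed.

End CountingPermutations.

Lemma count_permutations_map (T U : eqType) (f : T -> U) (P : pred (seq U)) W :
  uniq W -> {in W &, injective f} ->
  count P (permutations (map f W)) = count (fun s => P (map f s)) (permutations W).
Proof.
move=> uW inj_f; rewrite -(count_map (map f) P); apply/esym/seq.permP/perm_eq_permutations.
- rewrite map_inj_in_uniq ?permutations_uniq // => s1 s2 s1W s2W.
  by apply: (inj_in_map inj_f); apply/allP => x /=;
    [move: s1W | move: s2W]; rewrite mem_permutations => /perm_mem ->.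
- by move=> _ /mapP[s + ->]; rewrite mem_permutations => /(perm_map f).
- by rewrite size_map !size_permutations ?size_map ?map_inj_in_uniq.
Qed.

(** * The six patterns of length 3 *)

(* [pattern3 i j k t]: [t] has length 3 and its entries at positions [i], [j],
   [k] are increasing, so [t] is an occurrence of the pattern whose inverse is
   [i+1 j+1 k+1]: [pattern3 0 1 2] is 123 and [pattern3 0 2 1] is 132. *)
Definition pattern3 (i j k : nat) (t : seq nat) : bool :=
  (size t == 3) && (nth 0 t i < nth 0 t j) && (nth 0 t j < nth 0 t k).

(* [ballot n m] counts the arrangements [s] of an [n]-set [W] for which
   [y :: s] avoids 123 (equivalently 132), where [m] letters of [W] exceed [y];
   [ballot n 0] is the [n]-th Catalan number. *)
Fixpoint ballot (n m : nat) : nat :=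
  if n is n'.+1 then
    \sum_(m <= j < n'.+1) ballot n' j + (if m is m'.+1 then ballot n' m' else 0)
  else 1.

Lemma count_ltn_mono (W : seq nat) x1 x2 :
  x1 < x2 -> x2 \in W -> count (ltn x2) W < count (ltn x1) W.
Proof.
move=> lt12 x2W.
have -> : count (ltn x1) W = count (ltn x2) W + count (fun z => x1 < z <= x2) W.
  by rewrite -count_orb_disjoint => [|z /=]; [apply: eq_count => z /=|]; lia.
by rewrite -addn1 leq_add2l -has_count; apply/hasP; exists x2; rewrite //= lt12 leqnn.
Qed.

Lemma sum_count_ltn (W : seq nat) y (G : nat -> nat) : uniq W ->
  \sum_(x <- W | x <= y) G (count (ltn x) W) =
  \sum_(count (ltn y) W <= j < size W) G j.
Proof.
move=> uW; rewrite -big_filter -(big_map (fun x => count (ltn x) W) xpredT G).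
apply: perm_big; set ranks := map _ _.
have inj_rank : {in filter (fun x => x <= y) W &, injective (fun x => count (ltn x) W)}.
  move=> x1 x2; rewrite !mem_filter => /andP[_ x1W] /andP[_ x2W] eq_rank.
  have [lt12|lt21|//] := ltngtP x1 x2.
    by have := count_ltn_mono lt12 x2W; rewrite eq_rank ltnn.
  by have := count_ltn_mono lt21 x1W; rewrite eq_rank ltnn.
have uranks : uniq ranks by rewrite map_inj_in_uniq // filter_uniq.
apply: uniq_perm => //; first exact: iota_uniq.
apply: (uniq_min_size uranks _ _).2 => [_ /mapP[x + ->]|].
  rewrite mem_filter mem_index_iota => /andP[le_xy xW].
  rewrite (sub_count (fun z => leq_ltn_trans le_xy)) /=.
  rewrite -(count_predC (ltn x) W) -addn1 leq_add2l -has_count.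
  by apply/hasP; exists x => //=; rewrite ltnn.
rewrite size_map size_filter size_iota -(count_predC (fun x => x <= y) W).
by rewrite (@eq_count _ (predC _) (ltn y)) ?addnK // => z /=; rewrite -ltnNge.
Qed.

Lemma sum_seq_pred1 (W : seq nat) (Pr : pred nat) (g : nat -> nat) x0 :
  uniq W -> x0 \in W -> {in W, Pr =1 pred1 x0} -> \sum_(x <- W | Pr x) g x = g x0.
Proof.
move=> uW x0W Pr_x0; rewrite -big_filter (eq_in_filter Pr_x0).
by rewrite filter_pred1_uniq // big_seq1.
Qed.

Lemma has_subseq_cons_max (P : pred (seq nat)) (s : seq nat) y :
  {in s, forall z, z <= y} -> (forall t, P (y :: t) -> has (ltn y) t) ->
  has_subseq P (y :: s) = has_subseq P s.
Proof.
move=> le_sy Py; rewrite has_subseq_cons; apply/orb_idl => /has_subseqP[t ts /Py].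
by case/hasP=> z /(mem_subseq ts)/le_sy; rewrite /= leqNgt => /negbTE->.
Qed.

Section BallotRecursion.

Variables (P : pred (seq nat)) (R : nat -> nat -> pred nat).
Hypothesis P_short : forall t, size t <= 1 -> ~~ P t.
Hypothesis P_cons2 : forall y x s,
  has_subseq P (y :: x :: s) =
  if x <= y then has_subseq P (x :: s) else has (R y x) s || has_subseq P (y :: s).
Hypothesis R_unique : forall y W, uniq W -> has (ltn y) W ->
  exists2 x0, x0 \in W & {in W, forall x, (y < x) && ~~ has (R y x) (rem x W) = (x == x0)}.

Lemma count_cons2_avoiders y x W : uniq W -> x \in W ->
  (forall z, count (fun s => ~~ has_subseq P (z :: s)) (permutations (rem x W)) =
             ballot (size W).-1 (count (ltn z) (rem x W))) ->
  count (fun s => ~~ has_subseq P (y :: x :: s)) (permutations (rem x W)) =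
  (if x <= y then ballot (size W).-1 (count (ltn x) W) else 0) +
  (if (y < x) && ~~ has (R y x) (rem x W)
   then ballot (size W).-1 (count (ltn y) W).-1 else 0).
Proof.
move=> uW xW IH.
transitivity (count (fun s => ~~ if x <= y then has_subseq P (x :: s)
    else has (R y x) (rem x W) || has_subseq P (y :: s)) (permutations (rem x W))).
  apply: eq_in_count => s; rewrite mem_permutations P_cons2.
  by move=> /(perm_has (R y x)) ->.
case: leqP => [le_xy|lt_yx] /=; first by rewrite addn0 IH count_rem xW /= ltnn subn0.
case: has => /=; first by rewrite count_pred0.
by rewrite IH count_rem xW /= lt_yx subn1.
Qed.

Lemma count_cons_avoiders y W : uniq W ->
  count (fun s => ~~ has_subseq P (y :: s)) (permutations W) =
  ballot (size W) (count (ltn y) W).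
Proof.
move sizeW: (size W) => n; elim: n => [|n IHn] in W y sizeW *.
  case: W sizeW => //= _ _; rewrite has_subseq_cons !has_subseq_nil.
  by rewrite !(negbTE (P_short _)).
move=> uW; rewrite count_permutations_cons ?sizeW //.
rewrite (eq_big_seq _ (fun x xW => count_cons2_avoiders y uW xW _)); last first.
  by move=> x xW z; rewrite IHn ?rem_uniq ?size_rem ?sizeW.
rewrite big_split /= -!big_mkcond /= sum_count_ltn // sizeW; congr (_ + _).
case def_m: (count (ltn y) W) => [|m].
  rewrite big1_seq // => x /andP[/andP[lt_yx _] xW].
  by have := count_ltn_mono lt_yx xW; rewrite def_m.
have [|x0 x0W R_x0] := @R_unique y W uW; first by rewrite has_count def_m.
by rewrite (sum_seq_pred1 _ uW x0W R_x0).
Qed.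

Hypothesis P_head_min : forall y t, P (y :: t) -> has (ltn y) t.

Lemma avoiders_ballot W : uniq W -> avoiders P W = ballot (size W) 0.
Proof.
move=> uW; set M := \max_(z <- W) z.
have le_WM : {in W, forall z, z <= M} by move=> z zW; apply: leq_bigmax_seq.
have -> : 0 = count (ltn M) W.
  by apply/esym/eqP; rewrite -leqn0 leqNgt -has_count; apply/hasPn => z /le_WM; rewrite /= -leqNgt.
rewrite -count_cons_avoiders //; apply: eq_in_count => s.
rewrite mem_permutations => /perm_mem sW.
by rewrite (has_subseq_cons_max _ (@P_head_min M)) // => z; rewrite sW => /le_WM.
Qed.

End BallotRecursion.

Lemma has_subseq123_cons2 y x s :
  has_subseq (pattern3 0 1 2) (y :: x :: s) =
  if x <= y then has_subseq (pattern3 0 1 2) (x :: s)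
  else has (ltn x) s || has_subseq (pattern3 0 1 2) (y :: s).
Proof.
rewrite has_subseq_cons2 !has_subseq_cons.
have -> : has_subseq (fun t => pattern3 0 1 2 [:: y, x & t]) s = (y < x) && has (ltn x) s.
  rewrite -has_subseq1 -has_subseq_andl; apply: eq_in_has_subseq => t _.
  by case: t => [|z [|? ?]]; rewrite /pattern3 /= ?andbF.
case: leqP => [le_xy|lt_yx] /=.
  have : has_subseq (fun t => pattern3 0 1 2 (y :: t)) s ->
         has_subseq (fun t => pattern3 0 1 2 (x :: t)) s.
    apply: sub_has_subseq => t; rewrite /pattern3 /= => /andP[/andP[-> lt_yt] ->].
    by rewrite (leq_ltn_trans le_xy).
  by move=> YX; rewrite orbA (orb_idl YX).
have : has_subseq (fun t => pattern3 0 1 2 (x :: t)) s -> has (ltn x) s.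
  case/has_subseqP=> -[|z t] // /mem_subseq zts /andP[/andP[_ lt_xz] _].
  by apply/hasP; exists z; rewrite ?zts ?inE ?eqxx.
by move=> XD; rewrite (orbCA (has_subseq _ s)) orbA (orb_idr XD).
Qed.

Lemma has_subseq132_cons2 y x s :
  has_subseq (pattern3 0 2 1) (y :: x :: s) =
  if x <= y then has_subseq (pattern3 0 2 1) (x :: s)
  else has (fun z => y < z < x) s || has_subseq (pattern3 0 2 1) (y :: s).
Proof.
rewrite has_subseq_cons2 !has_subseq_cons.
have -> : has_subseq (fun t => pattern3 0 2 1 [:: y, x & t]) s = has (fun z => y < z < x) s.
  rewrite -has_subseq1; apply: eq_in_has_subseq => t _.
  by case: t => [|z [|? ?]]; rewrite /pattern3 /= ?andbF.
case: leqP => [le_xy|lt_yx] /=.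
  rewrite (_ : has _ s = false) /=; last by apply/hasPn => z _; lia.
  have : has_subseq (fun t => pattern3 0 2 1 (y :: t)) s ->
         has_subseq (fun t => pattern3 0 2 1 (x :: t)) s.
    apply: sub_has_subseq => t; rewrite /pattern3 /= => /andP[/andP[-> lt_yt] ->].
    by rewrite (leq_ltn_trans le_xy).
  by move=> YX; rewrite orbA (orb_idl YX).
have : has_subseq (fun t => pattern3 0 2 1 (x :: t)) s ->
       has_subseq (fun t => pattern3 0 2 1 (y :: t)) s.
  apply: sub_has_subseq => t; rewrite /pattern3 /= => /andP[/andP[-> lt_xt] ->].
  by rewrite (ltn_trans lt_yx).
by move=> XY; rewrite (orbA (has_subseq _ s)) (orb_idr XY).
Qed.

Lemma unique_max_above y (W : seq nat) : uniq W -> has (ltn y) W ->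
  exists2 x0, x0 \in W &
  {in W, forall x, (y < x) && ~~ has (ltn x) (rem x W) = (x == x0)}.
Proof.
move=> uW /hasP[z zW lt_yz].
have le_Wmax u : u \in W -> u <= \max_(v <- W) v by move=> uW'; apply: leq_bigmax_seq.
have [x0 x0W max_x0] := ex_maxnP (ex_intro (fun u => u \in W) z zW) le_Wmax.
exists x0 => // x xW; have [->|neq_xx0] := eqVneq x x0.
  rewrite (leq_trans lt_yz (max_x0 z zW)) /=; apply/hasPn => u /mem_rem uW'.
  by rewrite /= -leqNgt max_x0.
apply/negbTE; rewrite negb_and negbK; apply/orP; right; apply/hasP; exists x0.
  by rewrite (mem_rem_uniq _ uW) inE /= eq_sym neq_xx0.
by rewrite /= ltn_neqAle neq_xx0 max_x0.
Qed.

Lemma unique_min_above y (W : seq nat) : uniq W -> has (ltn y) W ->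
  exists2 x0, x0 \in W &
  {in W, forall x, (y < x) && ~~ has (fun z => y < z < x) (rem x W) = (x == x0)}.
Proof.
move=> uW /hasP[z zW lt_yz].
have [|x0 /andP[x0W lt_yx0] min_x0] := @ex_minnP (fun u => (u \in W) && (y < u)).
  by exists z; rewrite zW.
exists x0 => // x xW; have [->|neq_xx0] := eqVneq x x0.
  rewrite lt_yx0 /=; apply/hasPn => u /mem_rem uW'; apply/negP => /andP[lt_yu lt_ux0].
  by have := min_x0 u; rewrite uW' lt_yu leqNgt lt_ux0 => /(_ isT).
case: (ltnP y x) => //= lt_yx; apply/negbTE; rewrite negbK; apply/hasP; exists x0.
  by rewrite (mem_rem_uniq _ uW) inE /= eq_sym neq_xx0.
by rewrite /= lt_yx0 ltn_neqAle eq_sym neq_xx0 min_x0 ?xW.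
Qed.

Definition catalan_pattern (P : pred (seq nat)) :=
  forall W, uniq W -> avoiders P W = ballot (size W) 0.

Lemma catalan123 : catalan_pattern (pattern3 0 1 2).
Proof.
apply: (avoiders_ballot _ has_subseq123_cons2 unique_max_above).
- by case=> [|? []].
- by move=> y [|a [|b []]] //; rewrite /pattern3 /= => /andP[->].
Qed.

Lemma catalan132 : catalan_pattern (pattern3 0 2 1).
Proof.
apply: (avoiders_ballot _ has_subseq132_cons2 unique_min_above).
- by case=> [|? []].
- by move=> y [|a [|b []]] //; rewrite /pattern3 /= => /andP[-> _]; rewrite orbT.
Qed.

Lemma eq_catalan_pattern P Q : P =1 Q -> catalan_pattern P -> catalan_pattern Q.
Proof.
move=> PQ catP W uW; rewrite -catP //; apply: eq_count => s.
by rewrite /has_subseq (eq_has PQ).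
Qed.

Lemma pattern3_rev i j k t : i < 3 -> j < 3 -> k < 3 ->
  pattern3 i j k (rev t) = pattern3 (2 - i) (2 - j) (2 - k) t.
Proof.
move=> lt_i3 lt_j3 lt_k3; rewrite /pattern3 size_rev; case: eqP => //= sz_t.
by rewrite !nth_rev ?sz_t // !subSS.
Qed.

Lemma catalan_pattern_rev P : catalan_pattern P -> catalan_pattern (fun t => P (rev t)).
Proof. by move=> catP W uW; rewrite avoiders_rev catP. Qed.

Lemma catalan_pattern3_rev i j k : i < 3 -> j < 3 -> k < 3 ->
  catalan_pattern (pattern3 i j k) -> catalan_pattern (pattern3 (2 - i) (2 - j) (2 - k)).
Proof.
move=> lt_i3 lt_j3 lt_k3 /catalan_pattern_rev; apply: eq_catalan_pattern => t.
exact: pattern3_rev.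
Qed.

Lemma pattern3_compl i j k N t : i < 3 -> j < 3 -> k < 3 -> {in t, forall z, z <= N} ->
  pattern3 i j k (map (fun x => N - x) t) = pattern3 k j i t.
Proof.
move=> lt_i3 lt_j3 lt_k3 le_tN; rewrite /pattern3 size_map; case: eqP => //= sz_t.
have le_nthN l : l < 3 -> nth 0 t l <= N by move=> lt_l3; rewrite le_tN ?mem_nth ?sz_t.
by rewrite !(nth_map 0) ?sz_t // !ltn_sub2lE ?le_nthN // andbC.
Qed.

Lemma catalan_pattern3_compl i j k : i < 3 -> j < 3 -> k < 3 ->
  catalan_pattern (pattern3 i j k) -> catalan_pattern (pattern3 k j i).
Proof.
move=> lt_i3 lt_j3 lt_k3 cat_ijk W uW; set N := \max_(z <- W) z.
have le_WN : {in W, forall z, z <= N} by move=> z zW; apply: leq_bigmax_seq.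
have inj_compl : {in W &, injective (fun x => N - x)}.
  by move=> x1 x2 /le_WN ? /le_WN ?; lia.
rewrite -(size_map (fun x => N - x)) -cat_ijk ?map_inj_in_uniq //.
rewrite /avoiders count_permutations_map //; apply: eq_in_count => s sW.
rewrite has_subseq_map; congr negb; apply: eq_in_has_subseq => t ts.
by rewrite pattern3_compl // => z /(mem_permutations_subseq sW ts)/le_WN.
Qed.

Lemma catalan_pattern3 i j k :
  perm_eq [:: i; j; k] [:: 0; 1; 2] -> catalan_pattern (pattern3 i j k).
Proof.
have cat012 := catalan123; have cat021 := catalan132.
have cat210 := @catalan_pattern3_compl 0 1 2 isT isT isT catalan123.
have cat201 := @catalan_pattern3_rev 0 2 1 isT isT isT catalan132.
have cat102 := @catalan_pattern3_compl 2 0 1 isT isT isT cat201.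
have cat120 := @catalan_pattern3_compl 0 2 1 isT isT isT catalan132.
move=> perm_ijk; have mem012 l : l \in [:: i; j; k] -> l < 3.
  by rewrite (perm_mem perm_ijk) !inE; case/or3P => /eqP->.
have [lt_i3 lt_j3 lt_k3] : [/\ i < 3, j < 3 & k < 3].
  by split; apply: mem012; rewrite !inE eqxx ?orbT.
move: perm_ijk lt_i3 lt_j3 lt_k3; clear mem012.
by case: i => [|[|[|i]]] //; case: j => [|[|[|j]]] //; case: k => [|[|[|k]]].
Qed.

(** * A pair pattern followed by another pattern *)

Definition pair_pattern (T : eqType) (r : rel T) (t : seq T) : bool :=
  if t is [:: x; y] then r x y else false.

Definition split_avoiders (T : eqType) (r : rel T) (Q : pred (seq T)) (W : seq T) :=
  count (fun s => ~~ has_split (pair_pattern r) Q s) (permutations W).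

Section PairThenPattern.

Variables (T : eqType) (r : rel T).
Hypothesis r_shift : forall x y z, ~~ r y x -> r y z -> r x z.
Implicit Types (Q : pred (seq T)) (W s : seq T).

Definition split_free Q y s :=
  has_subseq Q s && ~~ has_split (pair_pattern r) Q (y :: s).

Lemma has_split_pair_cons2 Q y x s :
  has_split (pair_pattern r) Q (y :: x :: s) =
  [|| r y x && has_subseq Q s, has_split (fun t => pair_pattern r (y :: t)) Q s
    | has_split (pair_pattern r) Q (x :: s)].
Proof.
rewrite has_split_cons // (@has_split_cons _ (fun t => pair_pattern r (y :: t))) // -orbA.
by rewrite -has_split_nil_pattern; congr (_ || _); apply: eq_in_has_split => // -[].
Qed.

Lemma split_free_cons Q y x s :
  split_free Q y (x :: s) =
  (~~ has_subseq Q s && has_subseq Q (x :: s)) || ~~ r y x && split_free Q x s.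
Proof.
rewrite /split_free has_split_pair_cons2 has_split_cons // has_subseq_cons.
case hQ: (has_subseq Q s) => /=; last first.
  have nsplit P : has_split P Q s = false.
    by apply/negbTE; apply: contraFN hQ; apply: has_split_subseqr.
  by rewrite !nsplit /= !andbF !orbF andbT.
rewrite orbT /=; case: (boolP (r y x)) => //= nr_yx.
suff SYX : has_split (fun t => pair_pattern r (y :: t)) Q s ->
           has_split (fun t => pair_pattern r (x :: t)) Q s by rewrite orbA (orb_idl SYX).
by apply: sub_has_split => // -[|z []] //=; apply: r_shift.
Qed.

Lemma count_split_free_cons Q y W : uniq W -> 0 < size W ->
  count (split_free Q y) (permutations W) = \sum_(x <- W)
    (count (fun s => ~~ has_subseq Q s && has_subseq Q (x :: s)) (permutations (rem x W)) +
     (if r y x then 0 else count (split_free Q x) (permutations (rem x W)))).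
Proof.
move=> uW W_gt0; rewrite count_permutations_cons //; apply: eq_bigr => x _.
under eq_count => s do rewrite split_free_cons.
rewrite count_orb_disjoint => [|s /andP[nQ _]]; last by rewrite /split_free (negbTE nQ) andbF.
by case: (r y x) => //=; rewrite count_pred0.
Qed.

Lemma sum_avoiders_rem Q W : uniq W -> 0 < size W ->
  \sum_(x <- W) avoiders Q (rem x W) =
  \sum_(x <- W) count (fun s => ~~ has_subseq Q s && has_subseq Q (x :: s))
                      (permutations (rem x W)) + avoiders Q W.
Proof.
move=> uW W_gt0; rewrite [avoiders Q W]/avoiders count_permutations_cons // -big_split /=.
apply: eq_bigr => x _; rewrite -count_orb_disjoint => [|s /andP[_ ->]] //.
by apply: eq_count => s; rewrite has_subseq_cons; case: (has_subseq Q s); case: has_subseq.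
Qed.

Lemma count_split_free_eq Q Q' : (forall W, uniq W -> avoiders Q W = avoiders Q' W) ->
  forall y W, uniq W ->
  count (split_free Q y) (permutations W) = count (split_free Q' y) (permutations W).
Proof.
move=> eqQ y W; move sizeW: (size W) => n; elim: n => [|n IHn] in y W sizeW *.
  case: W sizeW => // _ _; have : Q [::] = Q' [::].
    by move: (eqQ [::] isT); rewrite /avoiders /= !has_subseq_nil; do 2!case: (_ [::]).
  by rewrite /= /split_free /has_split /has_subseq /= => ->.
move=> uW; rewrite !count_split_free_cons ?sizeW // !big_split /=; congr (_ + _).
  apply: (@addIn (avoiders Q W)); rewrite {2}eqQ // -!sum_avoiders_rem ?sizeW //.
  by apply: eq_big_seq => x xW; rewrite eqQ ?rem_uniq.
apply: eq_big_seq => x xW; case: (r y x) => //.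
by rewrite IHn ?rem_uniq ?size_rem ?sizeW.
Qed.

Lemma split_avoidersE Q W y0 : {in W, forall z, ~~ r y0 z} ->
  split_avoiders r Q W = avoiders Q W + count (split_free Q y0) (permutations W).
Proof.
move=> nr_y0; rewrite /split_avoiders /avoiders -count_orb_disjoint; last first.
  by move=> s nQ; rewrite /split_free (negbTE nQ).
apply: eq_in_count => s sW; rewrite /split_free has_split_cons //.
have -> : has_split (fun t => pair_pattern r (y0 :: t)) Q s = false.
  apply/negP => /has_splitP[i /andP[/has_subseqP[[|z []] //= zs r_y0z] _]].
  have /nr_y0 := mem_permutations_subseq sW (subseq_trans zs (take_subseq _ _)) (mem_head _ _).
  by rewrite r_y0z.
case hQ: (has_subseq Q s) => //=.
by apply/negP => /has_split_subseqr; rewrite hQ.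
Qed.

Theorem split_avoiders_eq Q Q' W y0 :
  (forall W, uniq W -> avoiders Q W = avoiders Q' W) ->
  uniq W -> {in W, forall z, ~~ r y0 z} ->
  split_avoiders r Q W = split_avoiders r Q' W.
Proof.
by move=> eqQ uW nr_y0; rewrite !(split_avoidersE _ nr_y0) eqQ // (count_split_free_eq eqQ).
Qed.

End PairThenPattern.

Lemma split_avoiders_ltn (Q : pred (seq nat)) n : catalan_pattern Q ->
  split_avoiders ltn Q (iota 0 n) = split_avoiders ltn (pattern3 0 1 2) (iota 0 n).
Proof.
move=> catQ; apply: (@split_avoiders_eq _ ltn _ _ _ _ n).
- by move=> x y z; rewrite /ltn /=; lia.
- by move=> W uW; rewrite catQ // catalan123.
- exact: iota_uniq.
- by move=> z; rewrite mem_iota /ltn /=; lia.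
Qed.

Lemma perm_compl_iota n : perm_eq (map (fun x => n.-1 - x) (iota 0 n)) (iota 0 n).
Proof.
apply: uniq_perm; last 1 [exact: iota_uniq|move=> z; rewrite mem_iota].
  by rewrite map_inj_in_uniq ?iota_uniq // => x1 x2; rewrite !mem_iota /=; lia.
apply/mapP/idP => [[x] |lt_zn]; first by rewrite mem_iota /=; lia.
by exists (n.-1 - z); rewrite ?mem_iota /=; lia.
Qed.

(* Complementation turns 21 into 12 and 321 into 123. *)
Lemma split_avoiders_gtn (Q : pred (seq nat)) n : catalan_pattern Q ->
  split_avoiders gtn Q (iota 0 n) = split_avoiders ltn (pattern3 0 1 2) (iota 0 n).
Proof.
move=> catQ; rewrite (@split_avoiders_eq _ gtn _ _ (pattern3 2 1 0) _ 0) ?iota_uniq //.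
- rewrite /split_avoiders -(seq.permP (perm_permutations (perm_compl_iota n))).
  have inj_compl : {in iota 0 n &, injective (fun x => n.-1 - x)}.
    by move=> x1 x2; rewrite !mem_iota /=; lia.
  rewrite count_permutations_map ?iota_uniq //.
  apply: eq_in_count => s sW; rewrite has_split_map; congr negb.
  have le_s t : subseq t s -> {in t, forall z, z <= n.-1}.
    by move=> ts z /(mem_permutations_subseq sW ts); rewrite mem_iota /=; lia.
  apply: eq_in_has_split => t /le_s le_tn; last exact: pattern3_compl.
  case: t le_tn => [|x [|y []]] //= le_tn.
  move: (le_tn x) (le_tn y); rewrite !inE !eqxx orbT /gtn /= => /(_ isT) ? /(_ isT) ?.
  lia.
- by move=> x y z; rewrite /gtn /=; lia.
- by move=> W uW; rewrite catQ // (@catalan_pattern3 2 1 0 isT).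
Qed.

Definition pattern2 (i j : nat) (t : seq nat) : bool :=
  (size t == 2) && (nth 0 t i < nth 0 t j).

Lemma perm_eq01 i j : perm_eq [:: i; j] [:: 0; 1] -> (i, j) = (0, 1) \/ (i, j) = (1, 0).
Proof.
move=> perm_ij; have mem01 l : l \in [:: i; j] -> l < 2.
  by rewrite (perm_mem perm_ij) !inE; case/orP=> /eqP->.
have [lt_i2 lt_j2] : i < 2 /\ j < 2 by split; apply: mem01; rewrite !inE eqxx ?orbT.
move: perm_ij lt_i2 lt_j2; clear mem01.
by case: i => [|[|i]] //; case: j => [|[|j]] // _ _ _; [left|right].
Qed.

Lemma split_avoiders_pattern2 i j (Q : pred (seq nat)) n :
  perm_eq [:: i; j] [:: 0; 1] -> catalan_pattern Q ->
  count (fun s => ~~ has_split (pattern2 i j) Q s) (permutations (iota 0 n)) =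
  split_avoiders ltn (pattern3 0 1 2) (iota 0 n).
Proof.
move=> /perm_eq01[] [-> ->] catQ.
  rewrite -(split_avoiders_ltn n catQ); apply: eq_count => s.
  by rewrite (@eq_in_has_split _ _ (pair_pattern ltn) _ Q) // => -[|x [|y []]].
rewrite -(split_avoiders_gtn n catQ); apply: eq_count => s.
by rewrite (@eq_in_has_split _ _ (pair_pattern gtn) _ Q) // => -[|x [|y []]].
Qed.

Lemma split_avoiders_pattern2_rev i j (Q : pred (seq nat)) n :
  perm_eq [:: i; j] [:: 0; 1] -> catalan_pattern Q ->
  count (fun s => ~~ has_split Q (pattern2 i j) s) (permutations (iota 0 n)) =
  split_avoiders ltn (pattern3 0 1 2) (iota 0 n).
Proof.
move=> perm_ij /catalan_pattern_rev catQ.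
rewrite -(@split_avoiders_pattern2 j i _ n _ catQ); last first.
  by rewrite (perm_trans _ perm_ij) // -[[:: j; i]]/(rev [:: i; j]) perm_rev.
rewrite -(count_permutations_rev (fun s => ~~ has_split Q (pattern2 i j) s)).
apply: eq_count => s; rewrite has_split_rev; congr negb; apply: eq_in_has_split => // t _.
by case/perm_eq01: perm_ij => -[-> ->]; rewrite /pattern2 size_rev; case: t => [|x [|y []]].
Qed.

(** * Partially ordered patterns *)

Definition pop_occ k (p : pop k) (t : seq nat) : bool :=
  (size t == k) && [forall j : 'I_k, forall l : 'I_k, p j l ==> (nth 0 t j < nth 0 t l)].

Definition perm_seq n (pi : 'S_n) : seq nat := [seq val (pi i) | i <- enum 'I_n].

Lemma size_perm_seq n (pi : 'S_n) : size (perm_seq pi) = n.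
Proof. by rewrite size_map size_enum_ord. Qed.

Lemma nth_perm_seq n (pi : 'S_n) (i : 'I_n) : nth 0 (perm_seq pi) i = pi i.
Proof. by rewrite (nth_map i) ?nth_ord_enum ?size_enum_ord. Qed.

Lemma subseq_map_enum (T : finType) (g : T -> nat) (t : seq nat) :
  subseq t (map g (enum T)) -> exists2 u, subseq u (enum T) & t = map g u.
Proof.
by case/subseqP=> m _ ->; exists (mask m (enum T)); rewrite ?mask_subseq ?map_mask.
Qed.

Lemma sorted_enum_ord m : sorted (fun i j : 'I_m => i < j) (enum 'I_m).
Proof. by have := iota_ltn_sorted 0 m; rewrite -val_enum_ord sorted_map. Qed.

Lemma subseq_enum_ord m (u : seq 'I_m) :
  subseq u (enum 'I_m) = sorted (fun i j : 'I_m => i < j) u.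
Proof.
have lt_trans : transitive (fun i j : 'I_m => i < j) by move=> ? ? ?; apply: ltn_trans.
have lt_irr : irreflexive (fun i j : 'I_m => i < j) by move=> i; apply: ltnn.
apply/idP/idP => [sub_u|sorted_u].
  exact: (subseq_sorted lt_trans sub_u (sorted_enum_ord m)).
apply/(@subseq_uniqP _ u _ (enum_uniq _)); apply: (sorted_eq lt_trans) => //.
- by move=> i j /andP[/ltnW + lt_ji]; rewrite leqNgt lt_ji.
- exact: (sorted_filter lt_trans) (sorted_enum_ord m).
apply: uniq_perm => [||i]; first exact: (sorted_uniq lt_trans lt_irr sorted_u).
  exact/filter_uniq/enum_uniq.
by rewrite mem_filter mem_enum andbT.
Qed.

Lemma contains_has_subseq k n (p : pop k.+1) (pi : 'S_n) :
  contains p pi = has_subseq (pop_occ p) (perm_seq pi).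
Proof.
set g := fun i : 'I_n => val (pi i).
apply/existsP/has_subseqP => [[f /forallP f_occ]|[_ /subseq_map_enum[u sub_u ->]]].
  have nth_u (j : 'I_k.+1) : nth 0 (map g (map f (enum 'I_k.+1))) j = g (f j).
    by rewrite -map_comp (nth_map j) ?nth_ord_enum ?size_enum_ord.
  exists (map g (map f (enum 'I_k.+1))).
    apply: map_subseq; rewrite subseq_enum_ord; apply: homo_sorted (sorted_enum_ord _).
    by move=> j l lt_jl; have /andP[/implyP->] := forallP (f_occ j) l.
  rewrite /pop_occ !size_map -enumT -cardE card_ord eqxx; apply/forallP => j; apply/forallP => l.
  by rewrite !nth_u; have /andP[_] := forallP (f_occ j) l.
case/andP=> /eqP sz_u /forallP u_occ; rewrite size_map in sz_u.
case: u sz_u sub_u u_occ => // x0 u' sz_u sub_u u_occ; set u := x0 :: u' in sz_u sub_u u_occ *.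
exists [ffun j : 'I_k.+1 => nth x0 u j]; apply/forallP => j; apply/forallP => l.
rewrite !ffunE; apply/andP; split.
  have lt_trans : transitive (fun i j : 'I_n => i < j) by move=> ? ? ?; apply: ltn_trans.
  apply/implyP => lt_jl; move: sub_u; rewrite subseq_enum_ord.
  by move=> /(sorted_ltn_nth lt_trans x0); apply; rewrite ?inE ?sz_u.
apply/implyP => /(implyP (forallP (u_occ j) l)).
by rewrite !(nth_map x0) ?sz_u.
Qed.

Lemma perm_seq_permutations n (pi : 'S_n) : perm_seq pi \in permutations (iota 0 n).
Proof.
have uniq_pi : uniq (perm_seq pi).
  by rewrite map_inj_uniq ?enum_uniq // => i j /val_inj/perm_inj.
rewrite mem_permutations uniq_perm ?iota_uniq //.
apply: (uniq_min_size uniq_pi _ _).2; last by rewrite size_perm_seq size_iota.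
by move=> _ /mapP[i _ ->]; rewrite mem_iota /= ltn_ord.
Qed.

Lemma av_count_avoiders k (p : pop k.+1) n : av_count p n = avoiders (pop_occ p) (iota 0 n).
Proof.
have perm_S : perm_eq (map (@perm_seq n) (enum 'S_n)) (permutations (iota 0 n)).
  apply: perm_eq_permutations.
  - rewrite map_inj_uniq ?enum_uniq // => pi1 pi2 eq_pi; apply/permP => i; apply: val_inj.
    by rewrite /= -!nth_perm_seq eq_pi.
  - by move=> _ /mapP[pi _ ->]; rewrite -mem_permutations perm_seq_permutations.
  - by rewrite size_map -cardE card_Sn size_permutations ?iota_uniq ?size_iota.
rewrite /av_count cardsE cardE /enum_mem size_filter.
rewrite /avoiders -(seq.permP perm_S) count_map -enumT.
by apply: eq_count => pi; rewrite /= -contains_has_subseq.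
Qed.

Lemma pop_occ_pop5 a b c d e t :
  0 < a <= 5 -> 0 < b <= 5 -> 0 < c <= 5 -> 0 < d <= 5 -> 0 < e <= 5 ->
  pop_occ (pop5 a b c d e) t =
  [&& size t == 5, nth 0 t (c - 1) < nth 0 t (b - 1), nth 0 t (b - 1) < nth 0 t (a - 1),
      nth 0 t (c - 1) < nth 0 t (a - 1) & nth 0 t (e - 1) < nth 0 t (d - 1)].
Proof.
move=> a5 b5 c5 d5 e5; rewrite /pop_occ; case: (size t == 5) => //=.
apply/forallP/and4P => [occ_t|[lt_cb lt_ba lt_ca lt_ed] j].
  have lt_t u v : 0 < u <= 5 -> 0 < v <= 5 ->
      (u, v) \in [:: (c, b); (b, a); (c, a); (e, d)] -> nth 0 t (u - 1) < nth 0 t (v - 1).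
    move=> u5 v5 uv; have /implyP := forallP (occ_t (inord (u - 1))) (inord (v - 1)).
    have succ_pred w : 0 < w <= 5 -> (w - 1).+1 = w by lia.
    by rewrite /pop5 !inordK ?succ_pred //; try lia; apply.
  by rewrite !lt_t // !inE eqxx ?orbT.
apply/forallP => l; apply/implyP; rewrite /pop5 !inE.
have pos_j u : j.+1 = u -> (j : nat) = u - 1 by lia.
have pos_l u : l.+1 = u -> (l : nat) = u - 1 by lia.
by case/or4P => /eqP[/pos_j-> /pos_l->].
Qed.

Lemma pop_occ_pop5_123 a b c d e t :
  0 < a <= 3 -> 0 < b <= 3 -> 0 < c <= 3 -> 3 < d <= 5 -> 3 < e <= 5 ->
  pop_occ (pop5 a b c d e) t =
  pattern3 (c - 1) (b - 1) (a - 1) (take 3 t) && pattern2 (e - 4) (d - 4) (drop 3 t).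
Proof.
move=> a3 b3 c3 d5 e5; rewrite pop_occ_pop5; try lia.
rewrite /pattern3 /pattern2 !nth_drop !nth_take; try lia.
have -> : 3 + (e - 4) = e - 1 by lia.
have -> : 3 + (d - 4) = d - 1 by lia.
have <- : (size (take 3 t) == 3) && (size (drop 3 t) == 2) = (size t == 5).
  by case: t => [|x0 [|x1 [|x2 [|x3 [|x4 [|x5 t]]]]]].
case: (size (take 3 t) == 3); case: (size (drop 3 t) == 2); rewrite /= ?andbF //.
case lt_cb: (nth 0 t (c - 1) < _); case lt_ba: (nth 0 t (b - 1) < _) => //=.
by rewrite (ltn_trans lt_cb lt_ba).
Qed.

Lemma pop_occ_pop5_345 a b c d e t :
  2 < a <= 5 -> 2 < b <= 5 -> 2 < c <= 5 -> 0 < d <= 2 -> 0 < e <= 2 ->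
  pop_occ (pop5 a b c d e) t =
  pattern2 (e - 1) (d - 1) (take 2 t) && pattern3 (c - 3) (b - 3) (a - 3) (drop 2 t).
Proof.
move=> a5 b5 c5 d2 e2; rewrite pop_occ_pop5; try lia.
rewrite /pattern3 /pattern2 !nth_drop !nth_take; try lia.
have -> : 2 + (a - 3) = a - 1 by lia.
have -> : 2 + (b - 3) = b - 1 by lia.
have -> : 2 + (c - 3) = c - 1 by lia.
have <- : (size (take 2 t) == 2) && (size (drop 2 t) == 3) = (size t == 5).
  by case: t => [|x0 [|x1 [|x2 [|x3 [|x4 [|x5 t]]]]]].
case: (size (take 2 t) == 2); case: (size (drop 2 t) == 3); rewrite /= ?andbF //.
case lt_cb: (nth 0 t (c - 1) < _); case lt_ba: (nth 0 t (b - 1) < _); rewrite /= ?andbF //.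
by rewrite (ltn_trans lt_cb lt_ba) andbT.
Qed.

Lemma perm_eq_iota_mem (s : seq nat) m k :
  perm_eq s (iota m k) -> {in s, forall x, m <= x < m + k}.
Proof. by move=> /perm_mem eq_s x; rewrite eq_s mem_iota. Qed.

Lemma perm_eq_subn_rev (s : seq nat) m k :
  perm_eq s (iota m k) -> perm_eq (map (subn^~ m) (rev s)) (iota 0 k).
Proof.
move=> perm_s; have -> : iota 0 k = map (subn^~ m) (iota m k).
  apply: (@eq_from_nth _ 0) => [|i]; rewrite ?size_map ?size_iota // => lt_ik.
  by rewrite (nth_map 0) ?size_iota // !nth_iota // addKn.
by apply: perm_map; rewrite perm_rev.
Qed.

Lemma av_count_pop5_123 a b c d e n :
  perm_eq [:: a; b; c] [:: 1; 2; 3] -> perm_eq [:: d; e] [:: 4; 5] ->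
  av_count (pop5 a b c d e) n = split_avoiders ltn (pattern3 0 1 2) (iota 0 n).
Proof.
move=> perm_abc perm_de.
have /and3P[a3 b3 c3] : [&& 0 < a <= 3, 0 < b <= 3 & 0 < c <= 3].
  by rewrite !(@perm_eq_iota_mem _ 1 3 perm_abc) ?inE ?eqxx ?orbT.
have /andP[d5 e5] : (3 < d <= 5) && (3 < e <= 5).
  by rewrite !(@perm_eq_iota_mem _ 4 2 perm_de) ?inE ?eqxx ?orbT.
rewrite av_count_avoiders -(split_avoiders_pattern2_rev n (@perm_eq_subn_rev _ 4 2 perm_de)
  (catalan_pattern3 (@perm_eq_subn_rev _ 1 3 perm_abc))).
apply: eq_count => s; congr negb; apply: (@has_subseq_cat _ 3) => [t|u].
  exact: pop_occ_pop5_123 t a3 b3 c3 d5 e5.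
by case/andP=> /andP[/eqP].
Qed.

Lemma av_count_pop5_345 a b c d e n :
  perm_eq [:: a; b; c] [:: 3; 4; 5] -> perm_eq [:: d; e] [:: 1; 2] ->
  av_count (pop5 a b c d e) n = split_avoiders ltn (pattern3 0 1 2) (iota 0 n).
Proof.
move=> perm_abc perm_de.
have /and3P[a5 b5 c5] : [&& 2 < a <= 5, 2 < b <= 5 & 2 < c <= 5].
  by rewrite !(@perm_eq_iota_mem _ 3 3 perm_abc) ?inE ?eqxx ?orbT.
have /andP[d2 e2] : (0 < d <= 2) && (0 < e <= 2).
  by rewrite !(@perm_eq_iota_mem _ 1 2 perm_de) ?inE ?eqxx ?orbT.
rewrite av_count_avoiders -(split_avoiders_pattern2 n (@perm_eq_subn_rev _ 1 2 perm_de)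
  (catalan_pattern3 (@perm_eq_subn_rev _ 3 3 perm_abc))).
apply: eq_count => s; congr negb; apply: (@has_subseq_cat _ 2) => [t|u].
  exact: pop_occ_pop5_345 t a5 b5 c5 d2 e2.
by case/andP=> /eqP.
Qed.

Lemma av_count_admissible a b c d e n : admissible a b c d e ->
  av_count (pop5 a b c d e) n = split_avoiders ltn (pattern3 0 1 2) (iota 0 n).
Proof. by case/orP=> /andP[]; [apply: av_count_pop5_123 | apply: av_count_pop5_345]. Qed.

Theorem mainTheorem12 (a b c d e a' b' c' d' e' : nat) :
  admissible a b c d e -> admissible a' b' c' d' e' ->
  wilf_equiv (pop5 a b c d e) (pop5 a' b' c' d' e').
Proof.
by move=> adm adm' n _; rewrite (av_count_admissible n adm) (av_count_admissible n adm').
Qed.
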